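(* Let $h=\hat h\circ\tilde h:\Sigma^c\to\mathcal R$ be a random tornado tabulation hash function with $d$ derived characters, query keys $Q$ and selector function $f$. Let $\mathcal I_{X^{f,h}}$ denote the event that the set of derived selected keys $\tilde h(X^{f,h})$ is linearly independent. Then for any $\delta>0$, $$\Pr\left[|X^{f,h}|\ge(1+\delta)\mu^f\ \wedge\ \mathcal I_{X^{f,h}}\right]\le\left(\frac{e^\delta}{(1+\delta)^{1+\delta}}\right)^{\mu^f}.$$
   Context: Let $\Sigma=\{0,1,\dots,2^k-1\}$, identified with $k$-bit strings, $\oplus$ bitwise xor; throughout $|\Sigma|\ge2^8$; $\mathcal R=\{0,\dots,2^r-1\}$. A simple tabulation hash function $g:\Sigma^b\to\mathcal R'$ is $g(x_1\cdots x_b)=T_1[x_1]\oplus\cdots\oplus T_b[x_b]$ with independent fully random tables $T_i:\Sigma\to\mathcal R'$. A random tornado tabulation hash function $h:\Sigma^c\to\mathcal R$ with $d\ge1$ derived characters consists of mutually independent simple tabulation functions $\tilde h_i:\Sigma^{c+i-1}\to\Sigma$ ($i=0,\dots,d$) and $\hat h:\Sigma^{c+d}\to\mathcal R$; the derived key of $x=x_1\cdots x_c$ is $\tilde h(x)=\tilde x_1\cdots\tilde x_{c+d}$ with $\tilde x_i=x_i$ ($i<c$), $\tilde x_c=x_c\oplus\tilde h_0(\tilde x_1\cdots\tilde x_{c-1})$, $\tilde x_i=\tilde h_{i-c}(\tilde x_1\cdots\tilde x_{i-1})$ ($c<i\le c+d$); $h(x)=\hat h(\tilde h(x))$. A selector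 function with query keys $Q\subseteq\Sigma^c$ is $f:\Sigma^c\times\mathcal R\times\mathcal R^Q\to\{0,1\}$ with $f(q,\cdot,\cdot)=1$ for $q\in Q$; $X^{f,h}=\{x\in\Sigma^c: f(x,h(x),h|_Q)=1\}$; $p^f_x=\max_{\varphi\in\mathcal R^Q}\Pr_{r\sim\mathcal U(\mathcal R)}[f(x,r,\varphi)=1]$; $\mu^f=\sum_{x\in\Sigma^c}p^f_x$. A set $Y\subseteq\Sigma^b$ is linearly dependent if some nonempty $Y'\subseteq Y$ has, at every position, every character appearing an even number of times among the keys of $Y'$; otherwise linearly independent. *)

From HB Require Import structures.
From mathcomp Require Import all_boot all_order all_algebra.
From mathcomp Require Import reals exp sequences.
Set Implicit Arguments. Unset Strict Implicit. Unset Printing Implicit Defensive.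
Import Order.TTheory GRing.Theory Num.Theory.
Local Open Scope ring_scope.

(* Characters: k-bit strings, represented as row vectors over F_2;
   bitwise xor is the addition (+) of 'rV['F_2]_k. *)
Definition Sig (k : nat) : finType := 'rV['F_2]_k.

Definition Key (k c : nat) : finType := {ffun 'I_c -> Sig k}.

Definition simple_tab (k b : nat) (V : zmodType) (T : {ffun 'I_b -> {ffun Sig k -> V}})
  (s : seq (Sig k)) : V :=
  \sum_(j < b) T j (nth 0 s j).

(* The random choices of a tornado tabulation function with d derived characters:
   the tables of tilde h_i : Sigma^(c+i-1) -> Sigma (i = 0..d) and of
   hat h : Sigma^(c+d) -> R (R = r-bit strings). *)
Definition Omega (k r c d : nat) : finType :=
  ({dffun forall i : 'I_d.+1, {ffun 'I_(c + i - 1) -> {ffun Sig k -> Sig k}}} *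
   {ffun 'I_(c + d) -> {ffun Sig k -> Sig r}})%type.

Section Tornado.
Variables (k r c d : nat).

Definition derived_seq (w : Omega k r c d) (x : Key k c) : seq (Sig k) :=
  let xs := [seq x j | j <- enum 'I_c] in
  let pre := take c.-1 xs in
  let s0 := rcons pre (nth 0 xs c.-1 + simple_tab (w.1 ord0) pre) in
  let fix ext (n : nat) : seq (Sig k) :=
    match n with
    | 0 => s0
    | n'.+1 => let s' := ext n' in
               rcons s' (simple_tab (w.1 (inord n)) s')
    end in
  ext d.

Definition derived_key (w : Omega k r c d) (x : Key k c) : {ffun 'I_(c + d) -> Sig k} :=
  [ffun i : 'I_(c + d) => nth 0 (derived_seq w x) i].

Definition tornado (w : Omega k r c d) (x : Key k c) : Sig r :=
  simple_tab w.2 (derived_seq w x).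

Variable Q : {set Key k c}.
Variable f : Key k c -> Sig r -> {ffun {x : Key k c | x \in Q} -> Sig r} -> bool.

Definition restrQ (w : Omega k r c d) : {ffun {x : Key k c | x \in Q} -> Sig r} :=
  [ffun q => tornado w (val q)].

Definition selected (w : Omega k r c d) : {set Key k c} :=
  [set x | f x (tornado w x) (restrQ w)].

Definition p_sel (R : realType) (x : Key k c) : R :=
  (\max_(phi : {ffun {x : Key k c | x \in Q} -> Sig r}) #|[set y : Sig r | f x y phi]|)%:R
  / #|Sig r|%:R.

Definition mu_sel (R : realType) : R := \sum_(x : Key k c) p_sel R x.

End Tornado.

Definition lin_dep (k b : nat) (Y : {set {ffun 'I_b -> Sig k}}) : bool :=
  [exists Y' : {set {ffun 'I_b -> Sig k}},
     [&& Y' \subset Y, Y' != set0 &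
         [forall i : 'I_b, forall a : Sig k, ~~ odd #|[set y in Y' | y i == a]|]]].

Definition lin_indep (k b : nat) (Y : {set {ffun 'I_b -> Sig k}}) : bool :=
  ~~ lin_dep Y.

Definition Pr (R : realType) (T : finType) (E : pred T) : R :=
  #|[set w | E w]|%:R / #|T|%:R.

From HB Require Import structures.
From mathcomp Require Import all_boot all_order all_algebra.
From mathcomp Require Import reals exp sequences.
From mathcomp Require Import lra ring.
Import Order.TTheory GRing.Theory Num.Theory.
Local Open Scope ring_scope.
Set Implicit Arguments. Unset Strict Implicit. Unset Printing Implicit Defensive.

(* Fix the tables of the derived characters. The derived keys are then fixed and distinct
   (their first c characters determine the key), and h(x) = sum_j T_j[x~_j] is linear in the
   tables T of hat h. If the derived keys of S \cup Q are linearly independent over F_2, some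
   functional on (position, character) incidences is 1 at y~ and 0 at every other derived key;
   adding v times it to the tables shifts h(y) by v and fixes h on the rest of S \cup Q. So h(y)
   is uniform given everything else, and the probability that all of S is selected is at most
   prod_(y in S) p_y. Summing over injective m-tuples of selected non-query keys bounds the
   probability of the event by mu'^m / n^_m, where mu' = sum_(x \notin Q) p_x and n is the least
   number of selected non-query keys on the event. Comparing the binomial expansion of
   (1 + delta)^n with the exponential series gives an m <= n with
   mu'^m <= e^(delta mu') n^_m / (1 + delta)^n, and n + |Q| >= (1 + delta) mu turns this into
   the Chernoff bound. *)

Lemma F2_neq0 (x : 'F_2) : (x != 0) = (x == 1).
Proof. by case: x => -[|[|]]. Qed.

Lemma F2_natr_eq0 n : ((n%:R : 'F_2) == 0) = ~~ odd n.
Proof. by rewrite -(dvdn_pcharf (pchar_Fp (isT : prime 2))) dvdn2. Qed.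

Lemma lin_indep_subset k b (Y Z : {set {ffun 'I_b -> Sig k}}) :
  Y \subset Z -> lin_indep Z -> lin_indep Y.
Proof.
move=> sYZ; apply: contra => /existsP[Y' /and3P[sY'Y nzY' evenY']].
by apply/existsP; exists Y'; rewrite nzY' evenY' (subset_trans sY'Y sYZ).
Qed.

Section Incidence.
Variables k b : nat.
Local Notation key := {ffun 'I_b -> Sig k}.
Local Notation cell := ('I_b * Sig k)%type.

(* A subset of keys has every character an even number of times at every position iff the
   incidence vectors of its keys sum to 0. *)
Definition incidence_row (z : key) : 'rV['F_2]_#|{: cell}| :=
  \row_p ((enum_val p).2 == z (enum_val p).1)%:R.

Definition incidence_mx (D : {set key}) : 'M['F_2]_(#|D|, #|{: cell}|) :=
  \matrix_i incidence_row (enum_val i).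

Lemma sum_incidence_row (Y : {set key}) j a :
  (\sum_(z in Y) incidence_row z) 0 (enum_rank (j, a)) =
  #|[set y in Y | y j == a]|%:R.
Proof.
rewrite summxE -sum1dep_card natr_sum big_mkcondr /=.
by apply: eq_bigr => z _; rewrite mxE enum_rankK eq_sym; case: (_ == _).
Qed.

Lemma lin_dep_incidence (D Y : {set key}) : Y \subset D -> Y != set0 ->
  \sum_(z in Y) incidence_row z = 0 -> lin_dep D.
Proof.
move=> sYD nzY sumY; apply/existsP; exists Y; rewrite sYD nzY.
apply/forallP => j; apply/forallP => a; rewrite -F2_natr_eq0.
by rewrite -sum_incidence_row sumY mxE.
Qed.

Lemma lin_indep_row_free (D : {set key}) : lin_indep D -> row_free (incidence_mx D).
Proof.
rewrite -kermx_eq0; apply: contraR => /rowV0Pn[u /sub_kermxP uM nz_u].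
pose I := [pred i | u 0 i != 0].
apply: (@lin_dep_incidence _ (enum_val @: I)).
- by apply/subsetP => _ /imsetP[i _ ->]; apply: enum_valP.
- apply: contra nz_u => /eqP I0; apply/eqP/rowP => i; rewrite mxE.
  apply/eqP; apply: contraT => ui; rewrite -(in_set0 (enum_val i)) -I0; exact: imset_f.
rewrite big_imset /=; last by move=> i j _ _ /enum_val_inj.
rewrite -[RHS]uM mulmx_sum_row [RHS](bigID I) /= [X in _ = _ + X]big1 ?addr0.
  by apply: eq_bigr => i; rewrite inE F2_neq0 => /eqP->; rewrite scale1r rowK.
by move=> i /negPn/eqP->; rewrite scale0r.
Qed.

Lemma incidence_row_mul (z : key) n (B : 'M['F_2]_(#|{: cell}|, n)) i :
  (incidence_row z *m B) 0 i = \sum_j B (enum_rank (j, z j)) i.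
Proof.
rewrite mxE (reindex (@enum_rank _)) /=; last by apply: onW_bij; apply: enum_rank_bij.
rewrite (eq_bigr (fun p : cell => (p.2 == z p.1)%:R * B (enum_rank (p.1, p.2)) i)); last first.
  by case=> j a _; rewrite mxE enum_rankK.
rewrite -(pair_bigA _ (fun j a => (a == z j)%:R * B (enum_rank (j, a)) i)) /=.
apply: eq_bigr => j _; rewrite (bigD1 (z j)) //= eqxx mul1r big1 ?addr0 // => a.
by move/negbTE->; rewrite mul0r.
Qed.

Lemma lin_indep_dual (D : {set key}) y : lin_indep D -> y \in D ->
  exists eps : 'I_b -> Sig k -> 'F_2,
    forall z, z \in D -> \sum_j eps j (z j) = (z == y)%:R.
Proof.
move=> /lin_indep_row_free/row_freeP[B MB] yD.
exists (fun j a => B (enum_rank (j, a)) (enum_rank_in yD y)) => z zD.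
rewrite -incidence_row_mul.
have -> : incidence_row z = row (enum_rank_in yD z) (incidence_mx D).
  by rewrite rowK enum_rankK_in.
rewrite -row_mul MB !mxE.
by rewrite -(inj_eq enum_val_inj) !enum_rankK_in.
Qed.

End Incidence.

Lemma iter_rcons_cat (T : Type) (e : nat -> seq T) :
  (forall n, exists a, e n.+1 = rcons (e n) a) -> forall n, exists s, e n = e 0%N ++ s.
Proof.
move=> eS; elim=> [|n [s IHn]]; first by exists [::]; rewrite cats0.
by have [a ->] := eS n; exists (rcons s a); rewrite IHn rcons_cat.
Qed.

Section DerivedKey.
Variables k r c d : nat.
Hypothesis c_gt0 : (0 < c)%N.

Definition key_seq (x : Key k c) : seq (Sig k) := [seq x j | j <- enum 'I_c].

Lemma key_seqE (x : Key k c) : key_seq x = fgraph x.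
Proof. by rewrite -codom_ffun. Qed.

Lemma size_key_seq x : size (key_seq x) = c.
Proof. by rewrite size_map size_enum_ord. Qed.

Definition derived_head (w : Omega k r c d) (x : Key k c) : seq (Sig k) :=
  rcons (take c.-1 (key_seq x))
        (nth 0 (key_seq x) c.-1 + simple_tab (w.1 ord0) (take c.-1 (key_seq x))).

Lemma size_derived_head w x : size (derived_head w x) = c.
Proof.
by rewrite size_rcons size_take size_key_seq ltn_predL c_gt0 prednK.
Qed.

Lemma derived_seq_head w x : exists s, derived_seq w x = derived_head w x ++ s.
Proof.
rewrite /derived_seq; match goal with |- exists s, ?e d = _ => apply: (@iter_rcons_cat _ e) end.
by move=> n; eexists.
Qed.

Lemma derived_key_head w x (i : 'I_c) :
  derived_key w x (lshift d i) = nth 0 (derived_head w x) i.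
Proof.
have [s eq_seq] := derived_seq_head w x.
by rewrite ffunE eq_seq nth_cat size_derived_head /= ltn_ord.
Qed.

Lemma derived_head_inj w : injective (derived_head w).
Proof.
move=> x y /rcons_inj[eq_take]; rewrite eq_take => /addIr eq_last.
have split_last z : key_seq z = rcons (take c.-1 (key_seq z)) (nth 0 (key_seq z) c.-1).
  by rewrite -take_nth ?prednK ?take_oversize ?size_key_seq ?ltn_predL.
apply: (can_inj fgraphK); apply: val_inj; rewrite /= -!key_seqE.
by rewrite split_last eq_take eq_last -split_last.
Qed.

Lemma derived_key_inj (w : Omega k r c d) : injective (derived_key w).
Proof.
move=> x y /ffunP eq_key; apply: (derived_head_inj (w := w)).
apply: (eq_from_nth (x0 := 0)) => [|i]; rewrite !size_derived_head // => ltic.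
by rewrite -[i]/(nat_of_ord (Ordinal ltic)) -!derived_key_head eq_key.
Qed.

End DerivedKey.

Lemma card_set_sum (T : finType) (P : pred T) : #|[set x | P x]| = (\sum_x P x)%N.
Proof. by rewrite -sum1dep_card big_mkcond; apply: eq_bigr => x _; case: (P x). Qed.

Lemma sum_card_swap (T U : finType) (A : {set T}) (P : T -> U -> bool) :
  (\sum_(x in A) #|[set y | P x y]| = \sum_y #|[set x in A | P x y]|)%N.
Proof.
under eq_bigr => x _ do rewrite card_set_sum.
rewrite exchange_big; apply: eq_bigr => y _.
by rewrite card_set_sum big_mkcond; apply: eq_bigr => x _; case: (x \in A).
Qed.

Lemma card_uniform_shift (T : finType) (V : finZmodType) (tau : V -> T -> T)
    (h : T -> V) (F : T -> pred V) (A : {set T}) :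
  (forall v, injective (tau v)) -> (forall v t, h (tau v t) = h t + v) ->
  (forall v t, F (tau v t) =1 F t) -> (forall v t, (tau v t \in A) = (t \in A)) ->
  (#|[set t in A | F t (h t)]| * #|V| = \sum_(t in A) #|[set u | F t u]|)%N.
Proof.
move=> tau_inj h_tau F_tau A_tau.
have shift_fibre v : #|[set t in A | F t (h t + v)]| = #|[set t in A | F t (h t)]|.
  rewrite -[RHS](card_preimset _ (tau_inj v)); apply: eq_card => t.
  by rewrite !inE A_tau h_tau F_tau.
have translate t : #|[set v | F t (h t + v)]| = #|[set u | F t u]|.
  by rewrite -[RHS](card_preimset _ (addrI (h t))); apply: eq_card => v; rewrite !inE.
rewrite mulnC -sum_nat_const.
under eq_bigr => v _ do rewrite -(shift_fibre v).
by rewrite -sum_card_swap; apply: eq_bigr => t _; rewrite translate.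
Qed.

Lemma leq_ffact n n' m : (n <= n')%N -> (n ^_ m <= n' ^_ m)%N.
Proof.
by move=> le_nn'; rewrite !ffact_prod; apply: leq_prod => i _; rewrite leq_sub2r.
Qed.

Section ChernoffCalculus.
Variable R : realType.

Lemma exp_series_le_expR (x : R) n : 0 <= x ->
  \sum_(m < n) x ^+ m / m`!%:R <= expR x.
Proof.
move=> x_ge0; have -> : \sum_(m < n) x ^+ m / m`!%:R = series (exp_coeff x) n.
  by rewrite /series /= big_mkord; apply: eq_bigr => m _; rewrite exp_coeffE mulrC.
apply: nondecreasing_cvgn_le; last exact: is_cvg_series_exp_coeff.
move=> a b le_ab; apply: (nondecreasing_series (P := xpredT)) => // m _ _.
exact: exp_coeff_ge0.
Qed.

Lemma exists_falling_moment (mu delta : R) n : 0 <= mu -> 0 < delta ->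
  exists2 m, (m <= n)%N & mu ^+ m <= expR (delta * mu) / (1 + delta) ^+ n * (n ^_ m)%:R.
Proof.
(* Otherwise expR (delta * mu) = sum_m K 'C(n, m) delta^m < sum_(m <= n) (delta mu)^m / m!. *)
move=> mu_ge0 delta_gt0; set K := expR (delta * mu) / (1 + delta) ^+ n.
suff /existsP[m le_m] : [exists m : 'I_n.+1, mu ^+ m <= K * (n ^_ m)%:R].
  by exists m => //; rewrite -ltnS ltn_ord.
apply: contraT; rewrite negb_exists => /forallP small.
have binomial : \sum_(m < n.+1) K * ('C(n, m)%:R * delta ^+ m) = expR (delta * mu).
  rewrite -mulr_sumr (_ : \sum_(m < n.+1) _ = (1 + delta) ^+ n); last first.
    by rewrite exprDn; apply: eq_bigr => m _; rewrite expr1n mul1r mulr_natl.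
  by rewrite divfK // expf_neq0 // gt_eqF //; lra.
suff : expR (delta * mu) < \sum_(m < n.+1) (delta * mu) ^+ m / m`!%:R.
  by rewrite ltNge exp_series_le_expR // mulr_ge0 // ltW.
rewrite -binomial; apply: ltr_sum => [|m _].
  by apply/hasP; exists ord0; rewrite ?mem_index_enum.
have fact_gt0 : 0 < (m`!%:R : R) by rewrite ltr0n fact_gt0.
have -> : K * ('C(n, m)%:R * delta ^+ m) = delta ^+ m * (K * (n ^_ m)%:R / m`!%:R).
  by rewrite -bin_ffact natrM; field; rewrite gt_eqF.
rewrite exprMn -[X in _ < X]mulrA ltr_pM2l ?exprn_gt0 // ltr_pM2r ?invr_gt0 //.
by rewrite ltNge; apply: small.
Qed.

Lemma chernoff_exponent_le (mu S delta : R) n q : 0 < delta -> q%:R <= S ->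
  (1 + delta) * (mu + S) <= n%:R + q%:R ->
  expR (delta * mu) / (1 + delta) ^+ n <=
  powR (expR delta / powR (1 + delta) (1 + delta)) (mu + S).
Proof.
move=> delta_gt0 le_qS le_mu_nq; set L := ln (1 + delta).
have delta1_gt0 : 0 < 1 + delta by lra.
have L_ge0 : 0 <= L by apply: ln_ge0; lra.
have L_le : L <= delta by apply: le_ln1Dx; lra.
have expL : expR L = 1 + delta by rewrite lnK // posrE.
rewrite (_ : (1 + delta) ^+ n = expR (n%:R * L)); last by rewrite expRM_natl expL.
rewrite {2}/powR gt_eqF // -!expRB /powR gt_eqF ?expR_gt0 // expRK -/L ler_expR -subr_ge0.
have -> : (mu + S) * (delta - (1 + delta) * L) - (delta * mu - n%:R * L) =
    (n%:R + q%:R - (1 + delta) * (mu + S)) * L + q%:R * (delta - L) + delta * (S - q%:R).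
  by ring.
by rewrite !addr_ge0 // mulr_ge0 // ?subr_ge0 // ltW.
Qed.

End ChernoffCalculus.

Local Notation tilde_tables k c d :=
  {dffun forall i : 'I_d.+1, {ffun 'I_(c + i - 1) -> {ffun Sig k -> Sig k}}}.
Local Notation hat_tables k r c d := {ffun 'I_(c + d) -> {ffun Sig k -> Sig r}}.

Definition sel_weight k r c (Q : {set Key k c})
    (f : Key k c -> Sig r -> {ffun {x : Key k c | x \in Q} -> Sig r} -> bool)
    (x : Key k c) : nat :=
  \max_(phi : {ffun {x : Key k c | x \in Q} -> Sig r}) #|[set u : Sig r | f x u phi]|.

Section FixedTildeTables.
Variables k r c d : nat.
Hypothesis c_gt0 : (0 < c)%N.
Variable Q : {set Key k c}.
Variable f : Key k c -> Sig r -> {ffun {x : Key k c | x \in Q} -> Sig r} -> bool.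
Hypothesis fQ : forall q, q \in Q -> forall u phi, f q u phi.
Variable w1 : tilde_tables k c d.

Local Notation hat := (hat_tables k r c d).

(* Derived keys do not depend on the tables of hat h; the 0 is an arbitrary choice. *)
Definition dkey (x : Key k c) := derived_key ((w1, 0) : Omega k r c d) x.

Definition hash (w2 : hat) (x : Key k c) : Sig r := \sum_j w2 j (dkey x j).

Definition sel (w2 : hat) (x : Key k c) := f x (hash w2 x) [ffun q => hash w2 (val q)].

Lemma derived_keyE (w2 : hat) : derived_key ((w1, w2) : Omega k r c d) = dkey.
Proof. by []. Qed.

Lemma selectedE (w2 : hat) : selected f ((w1, w2) : Omega k r c d) = [set x | sel w2 x].
Proof.
have tornadoE x : tornado ((w1, w2) : Omega k r c d) x = hash w2 x.
  by apply: eq_bigr => j _; rewrite ffunE.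
apply/setP => x; rewrite !inE /sel tornadoE; congr f.
by apply/ffunP => q; rewrite !ffunE tornadoE.
Qed.

Lemma Q_sub_sel (w2 : hat) : Q \subset [set x | sel w2 x].
Proof. by apply/subsetP => q qQ; rewrite inE /sel fQ. Qed.

Lemma hashD (w2 w2' : hat) x : hash (w2 + w2') x = hash w2 x + hash w2' x.
Proof. by rewrite -big_split; apply: eq_bigr => j _; rewrite !ffunE. Qed.

Lemma hash_dual (S : {set Key k c}) y : y \in S -> lin_indep (dkey @: S) ->
  exists D : Sig r -> hat, forall v x, x \in S -> hash (D v) x = (x == y)%:R *: v.
Proof.
move=> yS /lin_indep_dual/(_ (imset_f dkey yS))[eps eps_dual].
exists (fun v => [ffun j => [ffun a => eps j a *: v]]) => v x xS.
rewrite /hash (eq_bigr (fun j => eps j (dkey x j) *: v)) => [|j _]; last by rewrite !ffunE.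
by rewrite -scaler_suml eps_dual ?imset_f // (inj_eq (@derived_key_inj _ _ _ _ c_gt0 _)).
Qed.

Lemma card_sel_cons (s : seq (Key k c)) y : y \notin s -> y \notin Q ->
  lin_indep (dkey @: ([set z in y :: s] :|: Q)) ->
  (#|[set w2 : hat | all (sel w2) (y :: s)]| * #|Sig r| <=
   #|[set w2 : hat | all (sel w2) s]| * sel_weight f y)%N.
Proof.
move=> ys yQ indep.
have yS : y \in [set z in y :: s] :|: Q by rewrite !inE eqxx.
have [D hash_D] := hash_dual yS indep.
have hash_fixed v w2 x : x \in [set z in s] :|: Q -> hash (w2 + D v) x = hash w2 x.
  move=> xS; have x_neq_y : (x == y) = false.
    by apply/eqP => xy; move: xS; rewrite xy !inE (negbTE ys) (negbTE yQ).
  rewrite hashD hash_D ?x_neq_y ?scale0r ?addr0 //.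
  by move: xS; rewrite !inE => /orP[] ->; rewrite ?orbT.
have phi_fixed v w2 :
    [ffun q => hash (w2 + D v) (val q)] = [ffun q : {x | x \in Q} => hash w2 (val q)].
  by apply/ffunP => q; rewrite !ffunE hash_fixed // inE (valP q) orbT.
have sel_fixed v w2 : all (sel (w2 + D v)) s = all (sel w2) s.
  by apply: eq_in_all => x xs; rewrite /sel phi_fixed hash_fixed // !inE xs.
have hash_shift v w2 : hash (w2 + D v) y = hash w2 y + v.
  by rewrite hashD hash_D ?eqxx ?scale1r // !inE eqxx.
pose A := [set w2 : hat | all (sel w2) s].
pose F w2 u := f y u [ffun q : {x | x \in Q} => hash w2 (val q)].
have F_fixed v w2 : F (w2 + D v) =1 F w2 by move=> u; rewrite /F phi_fixed.
have A_fixed v w2 : (w2 + D v \in A) = (w2 \in A) by rewrite !inE sel_fixed.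
have := @card_uniform_shift hat (Sig r) (fun v w2 => w2 + D v) (hash^~ y) F A
  (fun v => addIr (D v)) hash_shift F_fixed A_fixed.
have -> : [set w2 in A | F w2 (hash w2 y)] = [set w2 | all (sel w2) (y :: s)].
  by apply/setP => w2; rewrite !inE /= andbC.
move=> ->; rewrite -sum_nat_const; apply: leq_sum => w2 _.
exact: (leq_bigmax (F := fun phi => #|[set u | f y u phi]|)).
Qed.

Lemma card_all_sel (s : seq (Key k c)) : uniq s -> all [predC Q] s ->
  lin_indep (dkey @: ([set z in s] :|: Q)) ->
  (#|[set w2 : hat | all (sel w2) s]| * #|Sig r| ^ size s <=
   #|{: hat}| * \prod_(y <- s) sel_weight f y)%N.
Proof.
elim: s => [|y s IHs] /=; first by rewrite big_nil !muln1 max_card.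
move=> /andP[ys uniq_s] /andP[yQ notQ_s] indep.
have indep_s : lin_indep (dkey @: ([set z in s] :|: Q)).
  apply: lin_indep_subset indep; apply: imsetS; apply/subsetP => x.
  by rewrite !inE => /orP[] ->; rewrite ?orbT.
rewrite big_cons expnS mulnA (leq_trans (leq_mul (card_sel_cons ys yQ indep) (leqnn _))) //.
by rewrite mulnAC [X in (_ <= X)%N]mulnCA mulnC leq_mul2l IHs ?orbT.
Qed.

Lemma card_tuple_sel m (E : {set hat}) (t : {ffun 'I_m -> Key k c}) :
  (forall w2, w2 \in E -> lin_indep (dkey @: [set x | sel w2 x])) ->
  (#|[set w2 in E | (t \in ffun_on ([set x | sel w2 x] :\: Q)) && injectiveb t]| *
     #|Sig r| ^ m <= #|{: hat}| * \prod_i ((t i \notin Q) * sel_weight f (t i)))%N.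
Proof.
move=> indepE; set W := [set w2 in E | _].
have [-> | [w0 w0W]] := set_0Vmem W; first by rewrite cards0.
move: (w0W); rewrite inE => /and3P[w0E /ffun_onP t_sel t_inj].
have t_notQ i : t i \notin Q by have := t_sel i; rewrite !inE => /andP[].
have indep_t : lin_indep (dkey @: ([set z in codom t] :|: Q)).
  apply: lin_indep_subset (indepE w0 w0E); apply: imsetS; apply/subsetP => x.
  rewrite !inE => /orP[/codomP[i ->] | xQ]; last by rewrite /sel fQ.
  by have := t_sel i; rewrite !inE => /andP[].
have notQ_t : all [predC Q] (codom t) by apply/allP => _ /codomP[i ->]; apply: t_notQ.
have := card_all_sel t_inj notQ_t indep_t.
rewrite size_codom card_ord big_image => card_t.
apply: leq_trans (leq_trans (leq_mul (subset_leq_card _) (leqnn _)) card_t) _.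
  apply/subsetP => w2; rewrite !inE => /and3P[_ /ffun_onP w2_sel _].
  by apply/allP => _ /codomP[i ->]; have := w2_sel i; rewrite !inE => /andP[].
by apply: eq_leq; congr (_ * _)%N; apply: eq_bigr => i _; rewrite t_notQ mul1n.
Qed.

Lemma falling_moment_count m (E : {set hat}) n :
  (forall w2, w2 \in E -> lin_indep (dkey @: [set x | sel w2 x])) ->
  (forall w2, w2 \in E -> n <= #|[set x | sel w2 x] :\: Q|)%N ->
  (#|E| * n ^_ m * #|Sig r| ^ m <=
   #|{: hat}| * (\sum_(x | x \notin Q) sel_weight f x) ^ m)%N.
Proof.
move=> indepE largeE.
have tuples : (#|E| * n ^_ m <= \sum_(t : {ffun 'I_m -> Key k c})
    #|[set w2 in E | (t \in ffun_on ([set x | sel w2 x] :\: Q)) && injectiveb t]|)%N.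
  rewrite -sum_card_swap -sum_nat_const; apply: leq_sum => w2 w2E.
  by rewrite card_inj_ffuns_on card_ord leq_ffact ?largeE.
rewrite (leq_trans (leq_mul tuples (leqnn _))) // big_distrl /=.
apply: (@leq_trans (\sum_(t : {ffun 'I_m -> Key k c})
    #|{: hat}| * \prod_i ((t i \notin Q) * sel_weight f (t i)))%N).
  by apply: leq_sum => t _; apply: card_tuple_sel.
rewrite -big_distrr /= leq_mul2l.
rewrite -(bigA_distr_bigA (fun _ x => (x \notin Q) * sel_weight f x)%N) /= prod_nat_const card_ord.
have -> : (\sum_x (x \notin Q) * sel_weight f x = \sum_(x | x \notin Q) sel_weight f x)%N.
  by rewrite [RHS]big_mkcond; apply: eq_bigr => x _; case: (x \notin Q); rewrite ?mul1n.
by rewrite leqnn orbT.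
Qed.

Variable R : realType.

Lemma p_sel_ge1 q : q \in Q -> 1 <= p_sel f R q.
Proof.
move=> qQ; have N_gt0 : (0 < #|Sig r|)%N by apply/card_gt0P; exists 0.
rewrite ler_pdivlMr ?ltr0n // mul1r ler_nat.
apply: leq_trans (leq_bigmax (F := fun phi => #|[set u : Sig r | f q u phi]|) [ffun => 0]).
by apply: subset_leq_card; apply/subsetP => u _; rewrite inE fQ.
Qed.

Lemma mu_sel_split : mu_sel f R =
  (\sum_(x | x \notin Q) sel_weight f x)%:R / #|Sig r|%:R + \sum_(x in Q) p_sel f R x.
Proof. by rewrite /mu_sel (bigID (mem Q)) addrC natr_sum mulr_suml. Qed.

Lemma falling_moment_le m (E : {set hat}) n :
  (forall w2, w2 \in E -> lin_indep (dkey @: [set x | sel w2 x])) ->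
  (forall w2, w2 \in E -> n <= #|[set x | sel w2 x] :\: Q|)%N ->
  #|E|%:R * (n ^_ m)%:R <=
  ((\sum_(x | x \notin Q) sel_weight f x)%:R / #|Sig r|%:R) ^+ m * #|{: hat}|%:R :> R.
Proof.
move=> indepE largeE; have N_gt0 : 0 < #|Sig r|%:R :> R.
  by rewrite ltr0n; apply/card_gt0P; exists 0.
have := falling_moment_count m indepE largeE.
rewrite -(ler_nat R) !natrM !natrX -[X in _ <= _ * X ^+ _](divfK (lt0r_neq0 N_gt0)).
by rewrite exprMn mulrA ler_pM2r ?exprn_gt0 // [_ ^+ m * _]mulrC.
Qed.

Lemma card_event_le (delta : R) : 0 < delta ->
  #|[set w2 : hat |
      ((1 + delta) * mu_sel f R <= #|selected f ((w1, w2) : Omega k r c d)|%:R) &&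
          lin_indep (derived_key ((w1, w2) : Omega k r c d) @:
                 selected f ((w1, w2) : Omega k r c d))]|%:R
  <= powR (expR delta / powR (1 + delta) (1 + delta)) (mu_sel f R) * #|{: hat}|%:R.
Proof.
move=> delta_gt0; set E := [set w2 | _]; set B := powR _ _.
have memE w2 : w2 \in E -> ((1 + delta) * mu_sel f R <= #|[set x | sel w2 x]|%:R) /\
                          lin_indep (dkey @: [set x | sel w2 x]).
  by rewrite inE selectedE derived_keyE => /andP.
have [-> | [w0 w0E]] := set_0Vmem E; first by rewrite cards0 mulr_ge0 ?powR_ge0.
have [ws wsE min_ws] := arg_minnP (fun w2 => #|[set x | sel w2 x] :\: Q|) w0E.
set n0 := #|[set x | sel ws x] :\: Q| in min_ws.
pose mu' : R := (\sum_(x | x \notin Q) sel_weight f x)%:R / #|Sig r|%:R.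
have mu'_ge0 : 0 <= mu' by rewrite divr_ge0.
have [m le_m moment] := exists_falling_moment n0 mu'_ge0 delta_gt0.
have count := falling_moment_le m (fun w2 w2E => (memE w2 w2E).2) min_ws.
have ffact_n0_gt0 : 0 < (n0 ^_ m)%:R :> R by rewrite ltr0n ffact_gt0.
have hat_gt0 : 0 < #|{: hat}|%:R :> R by rewrite ltr0n; apply/card_gt0P; exists 0.
rewrite -(ler_pM2r ffact_n0_gt0) (le_trans count) // mulrAC ler_pM2r //.
apply: le_trans moment _; rewrite ler_pM2r // /B mu_sel_split.
apply: (chernoff_exponent_le (q := #|Q|)) => //.
  by rewrite -sum1_card natr_sum; apply: ler_sum => q; apply: p_sel_ge1.
have [large _] := memE ws wsE; rewrite /mu' -mu_sel_split (le_trans large) // -natrD ler_nat.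
by rewrite -(cardsID Q [set x | sel ws x]) (setIidPr (Q_sub_sel ws)) addnC.
Qed.

End FixedTildeTables.

Theorem lemma1p6 (R : realType) (k r c d : nat) (hk : (8 <= k)%N)
  (hc : (0 < c)%N) (hd : (1 <= d)%N)
  (Q : {set Key k c})
  (f : Key k c -> Sig r -> {ffun {x : Key k c | x \in Q} -> Sig r} -> bool)
  (hfQ : forall q, q \in Q -> forall y phi, f q y phi)
  (delta : R) (hdelta : 0 < delta) :
  Pr R [pred w : Omega k r c d |
         ((1 + delta) * mu_sel f R <= #|selected f w|%:R) &&
         lin_indep (derived_key w @: selected f w)]
  <= powR (expR delta / powR (1 + delta) (1 + delta)) (mu_sel f R).
Proof.
set P := [pred w | _].
have card_P : #|[set w | P w]| =
    (\sum_(w1 : tilde_tables k c d) #|[set w2 : hat_tables k r c d | P (w1, w2)]|)%N.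
  rewrite card_set_sum (eq_bigr (fun w => P (w.1, w.2) : nat)) => [|[] //].
  rewrite -(pair_bigA _ (fun w1 w2 => P (w1, w2) : nat)).
  by apply: eq_bigr => w1 _; rewrite card_set_sum.
have Omega_gt0 : (0 < #|Omega k r c d|)%N.
  by apply/card_gt0P; exists ([ffun => [ffun => [ffun => 0]]], 0).
rewrite /Pr card_P natr_sum ler_pdivrMr ?ltr0n // card_prod natrM mulrA.
rewrite mulrAC mulr_natr -sumr_const; apply: ler_sum => w1 _.
exact: card_event_le.
Qed.
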